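(* Let $n \ge m \ge 2$ and let $K_{n,m}$ be the complete bipartite graph with bipartition $(X,Y)$, $|X|=n$, $|Y|=m$. If $U$ is a strong edge geodetic set of $K_{n,m}$ with $Y \subseteq U$, then $|U| \ge n+1$.
   Context: All graphs are finite, simple and connected. A set $S \subseteq V(G)$ is a strong edge geodetic set of $G$ if one can assign to every unordered pair $\{u,v\}$ of distinct vertices of $S$ either one shortest $u,v$-path $P_{uv}$ in $G$ or no path, in such a way that every edge of $G$ lies on at least one of the assigned paths. *)

From mathcomp Require Import all_boot.
Set Implicit Arguments. Unset Strict Implicit. Unset Printing Implicit Defensive.

(* A simple graph on a finType T is a relation e : rel T,
   assumed symmetric and irreflexive (true for the complete bipartite graph below). *)

Section Graphs.
Variable T : finType.
Variable e : rel T.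

Definition is_walk (u v : T) (s : seq T) : Prop :=
  exists p, s = u :: p /\ path e u p /\ last u p = v.

Definition walk_len (s : seq T) : nat := (size s).-1.

Definition shortest_path (u v : T) (s : seq T) : Prop :=
  is_walk u v s /\ forall s', is_walk u v s' -> walk_len s <= walk_len s'.

Definition edge_on (a b : T) (s : seq T) : Prop :=
  ((a, b) \in zip s (behead s)) \/ ((b, a) \in zip s (behead s)).

(* Strong edge geodetic set: an assignment of at most one shortest path to
   every unordered pair {u,v} of distinct vertices of S (indexed by the
   2-element set [set u; v]) covering every edge of the graph. *)
Definition strong_edge_geodetic (S : {set T}) : Prop :=
  exists f : {set T} -> option (seq T),
    (forall u v P, u \in S -> v \in S -> u != v -> f [set u; v] = Some P ->
       shortest_path u v P \/ shortest_path v u P) /\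
    (forall a b, e a b -> exists u v P,
       [/\ u \in S, v \in S, u != v, f [set u; v] = Some P & edge_on a b P]).

End Graphs.

Definition inX n m (x : 'I_n + 'I_m) : bool := if x is inl _ then true else false.

Definition Kbip n m : rel ('I_n + 'I_m) := fun x y => inX x != inX y.

Definition Xpart n m : {set 'I_n + 'I_m} := [set x | inX x].
Definition Ypart n m : {set 'I_n + 'I_m} := [set x | ~~ inX x].

(* Let A be the set of vertices of X outside U. An edge {x, y} with x in A
   can only be covered by an assigned geodesic through x, and since all
   distances in K_{n,m} are at most 2 this geodesic is u x v with
   {u, v} = {y, y'} a pair of distinct vertices of Y. An assigned path has a
   single middle vertex, so (x, y) |-> (y, y') is injective from A * Y into
   the ordered pairs of distinct vertices of Y: |A| m <= m (m - 1), whence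
   |A| <= m - 1 and |U| >= (n - |A|) + m >= n + 1. *)

From mathcomp Require Import all_boot.
From mathcomp Require Import zify.
Set Implicit Arguments. Unset Strict Implicit. Unset Printing Implicit Defensive.

Lemma leq_card_rel (T1 T2 : finType) (A : {set T1}) (B : {set T2})
    (R : T1 -> T2 -> bool) :
  (forall x, x \in A -> exists2 y, y \in B & R x y) ->
  (forall x x' y, R x y -> R x' y -> x = x') ->
  #|A| <= #|B|.
Proof.
move=> hex Rinj.
have -> : #|A| = #|[set Some x | x in A]| by rewrite card_imset // => x y [].
apply: leq_trans (leq_imset_card (fun y => [pick x | R x y]) B).
apply/subset_leq_card/subsetP => _ /imsetP [x xA ->].
have [y yB Rxy] := hex x xA; apply/imsetP; exists y => //.
by case: pickP => [x' /(Rinj _ _ _ Rxy) -> | /(_ x)]; rewrite ?Rxy.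
Qed.

Lemma card_offdiag m : #|[set q : 'I_m * 'I_m | q.1 != q.2]| = m * m - m.
Proof.
have diagE : [set q : 'I_m * 'I_m | q.1 == q.2] = [set (i, i) | i : 'I_m].
  apply/setP => -[i j]; rewrite inE /=; apply/eqP/imsetP => [-> | [k _ [-> ->]]].
  - by exists j.
  - by [].
have card_diag : #|[set q : 'I_m * 'I_m | q.1 == q.2]| = m.
  by rewrite diagE card_imset ?card_ord // => i j [].
have := cardsC [set q : 'I_m * 'I_m | q.1 == q.2].
rewrite card_diag card_prod card_ord.
have -> : ~: [set q : 'I_m * 'I_m | q.1 == q.2] = [set q | q.1 != q.2].
  by apply/setP => q; rewrite !inE.
by move=> <-; rewrite addKn.
Qed.

Lemma card_sum_set n m (U : {set 'I_n + 'I_m}) :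
  #|U| = #|[set a | inl a \in U]| + #|[set b | inr b \in U]|.
Proof.
rewrite -!sum1_card (big_sumType _ (fun x => x \in U)).
by congr (_ + _); apply: eq_bigl => x; rewrite inE.
Qed.

Lemma shortest_path_len_le (T : finType) (e : rel T) (u v : T) (P s : seq T) :
  shortest_path e u v P -> is_walk e u v s -> walk_len P <= walk_len s.
Proof. by move=> [_ Pmin] /Pmin. Qed.

Lemma edge_on_walk_len2 (T : finType) (e : rel T) (u v a b : T) (p : seq T) :
  path e u p -> last u p = v -> size p <= 2 -> edge_on a b (u :: p) ->
  a != u -> a != v -> p = [:: a; v] /\ (b == u) || (b == v).
Proof.
move=> _ <-; case: p => [|w [|w' [|? ?]]] //= _; rewrite /edge_on /=.
- by case; rewrite in_nil.
- by case; rewrite mem_seq1 xpair_eqE => /andP [/eqP -> /eqP ->]; rewrite eqxx.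
- case; rewrite !inE !xpair_eqE => /orP [] /andP [/eqP -> /eqP ->];
    by rewrite ?eqxx // => _ _; split; rewrite ?eqxx ?orbT.
Qed.

Section CompleteBipartite.
Variables n m : nat.
Notation V := ('I_n + 'I_m)%type.
Notation e := (@Kbip n m).

Lemma Kbip_walk_len_le2 (x0 : 'I_n) (y0 : 'I_m) (u v : V) :
  exists2 s, is_walk e u v s & walk_len s <= 2.
Proof.
case: u v => [a|b] [a'|b'].
- by exists [:: inl a; inr y0; inl a'] => //; exists [:: inr y0; inl a'].
- by exists [:: inl a; inr b'] => //; exists [:: inr b'].
- by exists [:: inr b; inl a'] => //; exists [:: inl a'].
- by exists [:: inr b; inl x0; inr b'] => //; exists [:: inl x0; inr b'].
Qed.

Lemma Kbip_geodesic_through_X (u v : V) P (a : 'I_n) (b : 'I_m) :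
  shortest_path e u v P -> u != v -> edge_on (inl a) (inr b) P ->
  inl a != u -> inl a != v ->
  exists2 c, c != b & [set u; v] = [set inr b; inr c] /\ P = [:: u; inl a; v].
Proof.
move=> Pgeo uv abP au av.
have [s ws s_le2] := Kbip_walk_len_le2 a b u v.
have P_le2 := leq_trans (shortest_path_len_le Pgeo ws) s_le2.
case: Pgeo => -[p [PE [up pv]]] _ {s ws s_le2}; subst P.
have [pE buv] := edge_on_walk_len2 up pv P_le2 abP au av; subst p.
move: up buv uv {pv P_le2 abP au av}; rewrite /= andbT.
case: u v => [?|c] [?|d] //= _ /orP [] /eqP [<-] cd.
- by exists d => //; apply: contraNneq cd => ->.
- by exists c; [apply: contraNneq cd => -> | rewrite setUC].
Qed.

Lemma Kbip_seg_card_X_outside (U : {set V}) :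
  strong_edge_geodetic e U -> #|[set a | inl a \notin U]| * m <= m * m - m.
Proof.
move=> [f [f_geo f_cover]].
pose mid (q : 'I_m * 'I_m) :=
  omap (fun P => nth (inr q.1) P 1) (f [set inr q.1; inr q.2]).
pose R (p : 'I_n * 'I_m) (q : 'I_m * 'I_m) :=
  [&& q.1 == p.2, q.1 != q.2 & mid q == Some (inl p.1)].
suff : #|setX [set a | inl a \notin U] [set: 'I_m]|
    <= #|[set q : 'I_m * 'I_m | q.1 != q.2]|.
  by rewrite cardsX cardsT card_ord card_offdiag.
apply: (@leq_card_rel _ _ _ _ R) => [[a b] | [a b] [a' b'] q].
- rewrite !inE /= andbT => aU.
  have [u [v [P [uU vU uv fP abP]]]] := f_cover (inl a) (inr b) erefl.
  have au : inl a != u by apply: contraNneq aU => ->.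
  have av : inl a != v by apply: contraNneq aU => ->.
  have [c cb [uvE Pmid]] : exists2 c, c != b &
      [set u; v] = [set inr b; inr c] /\ nth (inr b) P 1 = inl a.
    have [Pgeo | Pgeo] := f_geo u v P uU vU uv fP.
    + have [c cb [-> ->]] := Kbip_geodesic_through_X Pgeo uv abP au av.
      by exists c.
    + rewrite eq_sym in uv.
      have [c cb [uvE ->]] := Kbip_geodesic_through_X Pgeo uv abP av au.
      by exists c; rewrite // setUC uvE.
  exists (b, c); first by rewrite inE eq_sym.
  by rewrite /R /mid /= eqxx eq_sym cb -uvE fP /= Pmid.
- case: q => c d; rewrite /R /=.
  by move=> /and3P [/eqP <- _ /eqP ->] /and3P [/eqP <- _ /eqP [->]].
Qed.

End CompleteBipartite.

Theorem mainTheorem3 (n m : nat) (U : {set 'I_n + 'I_m}) :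
  2 <= m -> m <= n ->
  Ypart n m \subset U ->
  strong_edge_geodetic (@Kbip n m) U ->
  n.+1 <= #|U|.
Proof.
move=> m_ge2 _ YU Useg.
have missing_le := Kbip_seg_card_X_outside Useg.
have Y_in_U : [set b | inr b \in U] = [set: 'I_m].
  by apply/setP => b; rewrite !inE (subsetP YU) // inE.
have := cardsC [set a | inl a \notin U].
have -> : ~: [set a | inl a \notin U] = [set a | inl a \in U].
  by apply/setP => a; rewrite !inE negbK.
rewrite card_sum_set Y_in_U !cardsT !card_ord.
nia.
Qed.
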